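(* Let $R\in\{\mathrm{ML},\mathrm{wML},\mathrm{C},\mathrm{S}\}$, let $\varphi$ be a precise forecasting system and let $[p,q]\in\mathscr I$ with $p<q$. If $\Omega_R(\varphi)=\Omega_R([p,q])$, then $\varphi$ is non-computable and non-stationary.
   Context: Notation: $\mathbb N=\{1,2,\dots\}$, $\mathbb N_0=\mathbb N\cup\{0\}$. $\Omega=\{0,1\}^{\mathbb N}$ is the set of paths $\omega=(\omega_1,\omega_2,\dots)$; $\omega_{1:n}=(\omega_1,\dots,\omega_n)$, $\omega_{1:0}=\square$. $\mathbb S=\bigcup_{n\in\mathbb N_0}\{0,1\}^n$ is the set of situations, $|s|$ the length, $sx$ concatenation. $\mathscr I$ is the set of closed intervals $I\subseteq[0,1]$. For $r\in[0,1]$ and $f:\{0,1\}\to\mathbb R$, $E_r(f)=rf(1)+(1-r)f(0)$; $\overline E_I(f)=\max_{r\in I}E_r(f)$. A forecasting system is a map $\varphi:\mathbb S\to\mathscr I$; $\underline\varphi(s)=\min\varphi(s)$, $\overline\varphi(s)=\max\varphi(s)$; it is precise if every $\varphi(s)$ is a singleton, stationary if constant (then identified with its value $I$). A real process is $F:\mathbb S\to\mathbb R$; $\Delta F(s)$ is $x\mapsto F(sx)-F(s)$. $M$ is a supermartingale for $\varphi$ if $\overline E_{\varphi(s)}(\Delta M(s))\le0$ for all $s$. A test process is a non-negative real process with $F(\square)=1$; a test supermartingale for $\varphi$ is a test process that is a supermartingale for $\varphi$. A multiplier process $D$ assigns to each $s$ a function $D(s):\{0,1\}\to[0,\infty)$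 and generates the test process $F(\square)=1$, $F(sx)=F(s)D(s)(x)$. Computability: maps from countable effectively encoded domains to $\mathbb N_0$ or $\mathbb Q$ are recursive if Turing-computable; a real map $r$ on a domain $\mathscr D$ is lower semicomputable if $r(d)=\lim_nq(d,n)$ for a recursive rational $q$ non-decreasing in $n$, computable if $|r(d)-q(d,n)|<2^{-n}$ for some recursive rational $q$. A forecasting system is computable if $\underline\varphi$ and $\overline\varphi$ are computable real maps on $\mathbb S$. $\mathscr F_{\mathrm{ML}}$: lower semicomputable test processes; $\mathscr F_{\mathrm{wML}}$: test processes generated by lower semicomputable multiplier processes; $\mathscr F_{\mathrm C}=\mathscr F_{\mathrm S}$: positive rational-valued recursive test processes. $\overline{\mathbb T}_R(\varphi)$: elements of $\mathscr F_R$ that are test supermartingales for $\varphi$. For $R\in\{\mathrm{ML},\mathrm{wML},\mathrm C\}$, $\omega$ is $R$-random for $\varphi$ if no $T\in\overline{\mathbb T}_R(\varphi)$ has $\limsup_nT(\omega_{1:n})=\infty$. A real growth function is a computable, non-decreasing, unbounded $\tau:\mathbb N_0\to[0,\infty)$; $\omega$ is S-random for $\varphi$ if there are no $T\in\overline{\mathbb T}_{\mathrm S}(\varphi)$ and real growth function $\tau$ with $\limsup_n[T(\omega_{1:n})-\tau(n)]\ge0$. $\Omega_R(\varphi)$ is the set of paths that are $R$-random for $\varphi$; for an interval $I$, $\Omega_R(I)$ refers to the stationary forecasting system with value $I$. *)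

From Stdlib Require Import Reals Lra List.
From Coquelicot Require Import Coquelicot.
Import ListNotations.
Open Scope R_scope.

Inductive code : Type :=
| CZero : code
| CSucc : code
| CProj : nat -> code
| CComp : code -> list code -> code
| CPrec : code -> code -> code
| CMu   : code -> code.

Inductive eval : code -> list nat -> nat -> Prop :=
| eZero v : eval CZero v 0
| eSucc x v : eval CSucc (x :: v) (S x)
| eProj i v : eval (CProj i) v (nth i v 0%nat)
| eComp f gs v ys y : evals gs v ys -> eval f ys y -> eval (CComp f gs) v y
| ePrec0 f g v y : eval f v y -> eval (CPrec f g) (0%nat :: v) y
| ePrecS f g n v r y :
    eval (CPrec f g) (n :: v) r -> eval g (n :: r :: v) y ->
    eval (CPrec f g) (S n :: v) y
| eMu f v n :
    eval f (n :: v) 0%nat ->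
    (forall m, (m < n)%nat -> exists k, eval f (m :: v) (S k)) ->
    eval (CMu f) v n
with evals : list code -> list nat -> list nat -> Prop :=
| esNil v : evals [] v []
| esCons g gs v y ys : eval g v y -> evals gs v ys -> evals (g :: gs) v (y :: ys).

Definition nat_recursive (k : nat) (f : list nat -> nat) : Prop :=
  exists c, forall v, length v = k -> eval c v (f v).

Definition rat_recursive (k : nat) (q : list nat -> R) : Prop :=
  exists a b c : list nat -> nat,
    nat_recursive k a /\ nat_recursive k b /\ nat_recursive k c /\
    forall v, length v = k ->
      q v = (INR (a v) - INR (b v)) / (INR (c v) + 1).

Definition sit := list bool.          (* s x is written s ++ [x] *)

(* effective bijection between situations and naturals *)
Fixpoint code_sit (s : sit) : nat :=
  match s with
  | [] => 0%nat
  | b :: t => (2 * code_sit t + (if b then 2 else 1))%nat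
  end.

Definition enc_S (s : sit) : list nat := [code_sit s].
Definition enc_SB (d : sit * bool) : list nat :=
  [code_sit (fst d); if snd d then 1%nat else 0%nat].
Definition enc_N (n : nat) : list nat := [n].

(* omega : nat -> bool, with omega_i = omega (i-1); omega_{1:n} *)
Definition prefix (w : nat -> bool) (n : nat) : sit := map w (seq 0 n).

Definition lower_semicomputable {D : Type} (k : nat) (enc : D -> list nat)
  (r : D -> R) : Prop :=
  exists q, rat_recursive (S k) q /\
    forall d, (forall n, q (enc d ++ [n]) <= q (enc d ++ [S n])) /\
              Un_cv (fun n => q (enc d ++ [n])) (r d).

Definition computable_real {D : Type} (k : nat) (enc : D -> list nat)
  (r : D -> R) : Prop :=
  exists q, rat_recursive (S k) q /\
    forall d n, Rabs (r d - q (enc d ++ [n])) < / 2 ^ n.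

(* phi s = (lower bound, upper bound) of the closed interval phi(s) *)
Definition fsys := sit -> R * R.

Definition forecasting_system (phi : fsys) : Prop :=
  forall s, 0 <= fst (phi s) /\ fst (phi s) <= snd (phi s) /\ snd (phi s) <= 1.

Definition precise (phi : fsys) : Prop := forall s, fst (phi s) = snd (phi s).

Definition stationary (phi : fsys) : Prop := exists I, forall s, phi s = I.

Definition computable_fs (phi : fsys) : Prop :=
  computable_real 1 enc_S (fun s => fst (phi s)) /\
  computable_real 1 enc_S (fun s => snd (phi s)).

Definition stat (p q : R) : fsys := fun _ => (p, q).

Definition process := sit -> R.

Definition E_r (r : R) (f : bool -> R) : R := r * f true + (1 - r) * f false.

(* overline E_{phi(s)}(Delta M(s)) <= 0, i.e. max over r in phi(s) is <= 0 *)
Definition supermartingale (phi : fsys) (M : process) : Prop :=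
  forall s r, fst (phi s) <= r <= snd (phi s) ->
    E_r r (fun x => M (s ++ [x]) - M s) <= 0.

Definition test_process (F : process) : Prop :=
  (forall s, 0 <= F s) /\ F [] = 1.

Definition generated_by (D : sit -> bool -> R) (F : process) : Prop :=
  F [] = 1 /\ forall s x, F (s ++ [x]) = F s * D s x.

Inductive rtype : Type := ML | wML | Cr | Sr.

Definition test_class (Rt : rtype) (F : process) : Prop :=
  match Rt with
  | ML => test_process F /\ lower_semicomputable 1 enc_S F
  | wML => exists D : sit -> bool -> R,
             (forall s x, 0 <= D s x) /\
             lower_semicomputable 2 enc_SB (fun d => D (fst d) (snd d)) /\
             generated_by D F
  | Cr | Sr => test_process F /\ (forall s, 0 < F s) /\
             exists q, rat_recursive 1 q /\ forall s, F s = q (enc_S s)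
  end.

Definition test_supermartingale_in (Rt : rtype) (phi : fsys) (T : process) :=
  test_class Rt T /\ test_process T /\ supermartingale phi T.

Definition real_growth (tau : nat -> R) : Prop :=
  computable_real 1 enc_N tau /\ (forall n, 0 <= tau n) /\
  (forall n, tau n <= tau (S n)) /\ (forall M, exists n, M < tau n).

Definition random (Rt : rtype) (phi : fsys) (w : nat -> bool) : Prop :=
  match Rt with
  | Sr => ~ exists T tau, test_supermartingale_in Sr phi T /\ real_growth tau /\
            Rbar_le (Finite 0) (LimSup_seq (fun n => T (prefix w n) - tau n))
  | _ => ~ exists T, test_supermartingale_in Rt phi T /\
            LimSup_seq (fun n => T (prefix w n)) = p_infty
  end.

(** Choose a dyadic [J / M] with [[(J - 3) / M, (J + 3) / M]] inside [[p, q]]. If [phi] is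
    computable or stationary, a recursive [dn] tells, up to [1 / M], on which side of [J / M]
    the forecast [phi s] lies, and betting slightly on the corresponding outcome gives a rational
    recursive test supermartingale [bet] for [phi], which lies in every class of tests. Under the
    forecast [(J + 3) / M] (resp. [(J - 3) / M]) on the two sides, [bet] grows like [g ^ n] for a
    fixed [g > 1]. The countably many test supermartingales for [[p, q]], mixed with summable
    weights and together with [g ^ n / bet], form a supermartingale for that forecast; following
    the outcomes along which it does not increase yields a path that is random for [[p, q]], but
    on which [bet] grows like [g ^ n], so the path is not random for [phi]. *)

From Stdlib Require Import Reals List Lia Lra ZArith Cantor.
From Stdlib Require Import ClassicalEpsilon FunctionalExtensionality.
From Coquelicot Require Import Coquelicot.
Import ListNotations.
Open Scope nat_scope.

(** * Partial recursive functions *)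

Section CodeInd.
Variable P : code -> Prop.
Hypothesis P_zero : P CZero.
Hypothesis P_succ : P CSucc.
Hypothesis P_proj : forall i, P (CProj i).
Hypothesis P_comp : forall f gs, P f -> List.Forall P gs -> P (CComp f gs).
Hypothesis P_prec : forall f g, P f -> P g -> P (CPrec f g).
Hypothesis P_mu : forall f, P f -> P (CMu f).

Fixpoint code_nested_ind (c : code) : P c :=
  match c with
  | CZero => P_zero
  | CSucc => P_succ
  | CProj i => P_proj i
  | CComp f gs => P_comp f gs (code_nested_ind f)
      ((fix go l : List.Forall P l :=
          match l with
          | [] => List.Forall_nil _
          | g :: l' => List.Forall_cons _ (code_nested_ind g) (go l')
          end) gs)
  | CPrec f g => P_prec f g (code_nested_ind f) (code_nested_ind g)
  | CMu f => P_mu f (code_nested_ind f)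
  end.
End CodeInd.

Lemma eval_functional c : forall v y y', eval c v y -> eval c v y' -> y = y'.
Proof.
  induction c as [| | i | f gs IHf IHgs | f g IHf IHg | f IHf] using code_nested_ind;
    intros v y y' E E'.
  - inversion E; inversion E'; subst; reflexivity.
  - inversion E; inversion E'; subst; congruence.
  - inversion E; inversion E'; subst; reflexivity.
  - inversion E as [| | | ? ? ? ys ? Egs Ef | | |]; subst.
    inversion E' as [| | | ? ? ? ys' ? Egs' Ef' | | |]; subst.
    assert (ys = ys') as <-; [|exact (IHf _ _ _ Ef Ef')].
    clear -IHgs Egs Egs'. revert ys ys' Egs Egs'.
    induction IHgs as [|g gs IHg _ IH]; intros ys ys' Egs Egs'.
    + inversion Egs; inversion Egs'; reflexivity.
    + inversion Egs; inversion Egs'; subst. f_equal; eauto.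
  - assert (Hprec : forall n w z z', eval (CPrec f g) (n :: w) z ->
                                    eval (CPrec f g) (n :: w) z' -> z = z').
    { induction n as [|n IHn]; intros w z z' A B; inversion A; inversion B; subst; eauto.
      match goal with
      | Hr : eval (CPrec f g) (n :: w) ?r, Hr' : eval (CPrec f g) (n :: w) ?r' |- _ =>
          assert (r = r') as <- by eauto
      end; eauto. }
    destruct v; [inversion E | eauto].
  - inversion E as [| | | | | | ? ? ? Ez Elt]; subst.
    inversion E' as [| | | | | | ? ? ? Ez' Elt']; subst.
    destruct (lt_eq_lt_dec y y') as [[Hlt|Heq]|Hlt]; auto.
    + destruct (Elt' _ Hlt) as [k Hk]. discriminate (IHf _ _ _ Ez Hk).
    + destruct (Elt _ Hlt) as [k Hk]. discriminate (IHf _ _ _ Ez' Hk).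
Qed.

Definition computes (c : code) (k : nat) (f : list nat -> nat) : Prop :=
  forall v, length v = k -> eval c v (f v).

Lemma computes_functional c k f f' :
  computes c k f -> computes c k f' -> forall v, length v = k -> f v = f' v.
Proof. intros H H' v L. exact (eval_functional _ _ _ _ (H v L) (H' v L)). Qed.

Lemma computes_zero k : computes CZero k (fun _ => 0).
Proof. intros v _. constructor. Qed.

Lemma computes_succ : computes CSucc 1 (fun v => S (nth 0 v 0)).
Proof. intros [|x []] L; try discriminate. constructor. Qed.

Lemma computes_proj i k : computes (CProj i) k (fun v => nth i v 0).
Proof. intros v _. constructor. Qed.

Lemma computes_comp f F gs Gs k :
  computes f (length Gs) F -> Forall2 (fun g G => computes g k G) gs Gs ->
  computes (CComp f gs) k (fun v => F (map (fun G => G v) Gs)).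
Proof.
  intros HF HG v L. apply eComp with (ys := map (fun G => G v) Gs).
  - clear HF. induction HG; constructor; auto.
  - apply HF. apply length_map.
Qed.

Lemma computes_prec f g k F G (h : list nat -> nat) :
  computes f k F -> computes g (S (S k)) G ->
  (forall w, h (0 :: w) = F w) ->
  (forall n w, h (S n :: w) = G (n :: h (n :: w) :: w)) ->
  computes (CPrec f g) (S k) h.
Proof.
  intros HF HG H0 HS [|n w] L; [discriminate|]. injection L as L.
  induction n as [|n IHn].
  - rewrite H0. constructor. auto.
  - rewrite HS. eapply ePrecS; [exact IHn | apply HG; simpl; lia].
Qed.

Fixpoint const_code (n : nat) : code :=
  match n with 0 => CZero | S n' => CComp CSucc [const_code n'] end.

Lemma computes_const n k : computes (const_code n) k (fun _ => n).
Proof.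
  induction n as [|n IHn]; [apply computes_zero|].
  apply (computes_comp _ _ [const_code n] [fun _ => n] k computes_succ).
  apply Forall2_cons; [exact IHn | apply Forall2_nil].
Qed.

Definition computes1 c (f : nat -> nat) := computes c 1 (fun v => f (nth 0 v 0)).
Definition computes2 c (f : nat -> nat -> nat) :=
  computes c 2 (fun v => f (nth 0 v 0) (nth 1 v 0)).
Definition computes3 c (f : nat -> nat -> nat -> nat) :=
  computes c 3 (fun v => f (nth 0 v 0) (nth 1 v 0) (nth 2 v 0)).

Lemma computes_comp1 c f g G k :
  computes1 c f -> computes g k G -> computes (CComp c [g]) k (fun v => f (G v)).
Proof.
  intros Hc Hg. apply (computes_comp c _ [g] [G] k Hc).
  apply Forall2_cons; [exact Hg | apply Forall2_nil].
Qed.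

Lemma computes_comp2 c f g1 G1 g2 G2 k :
  computes2 c f -> computes g1 k G1 -> computes g2 k G2 ->
  computes (CComp c [g1; g2]) k (fun v => f (G1 v) (G2 v)).
Proof.
  intros Hc H1 H2. apply (computes_comp c _ [g1; g2] [G1; G2] k Hc).
  repeat (apply Forall2_cons; [assumption|]). apply Forall2_nil.
Qed.

Lemma computes_comp3 c f g1 G1 g2 G2 g3 G3 k :
  computes3 c f -> computes g1 k G1 -> computes g2 k G2 -> computes g3 k G3 ->
  computes (CComp c [g1; g2; g3]) k (fun v => f (G1 v) (G2 v) (G3 v)).
Proof.
  intros Hc H1 H2 H3. apply (computes_comp c _ [g1; g2; g3] [G1; G2; G3] k Hc).
  repeat (apply Forall2_cons; [assumption|]). apply Forall2_nil.
Qed.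

Lemma computes1_prec f g b step (h : nat -> nat) :
  computes f 0 (fun _ => b) -> computes2 g step ->
  h 0 = b -> (forall j, h (S j) = step j (h j)) -> computes1 (CPrec f g) h.
Proof.
  intros Hf Hg H0 HS. apply (computes_prec f g 0 _ _ _ Hf Hg); intros; simpl; auto.
Qed.

Lemma computes2_prec f g base step (h : nat -> nat -> nat) :
  computes1 f base -> computes3 g step ->
  (forall n, h 0 n = base n) -> (forall j n, h (S j) n = step j (h j n) n) ->
  computes2 (CPrec f g) h.
Proof.
  intros Hf Hg H0 HS. apply (computes_prec f g 1 _ _ _ Hf Hg); intros; simpl; auto.
Qed.

Definition add_code := CPrec (CProj 0) (CComp CSucc [CProj 1]).
Lemma computes_add : computes2 add_code Nat.add.
Proof.
  apply (computes_prec _ _ 1 _ _ _ (computes_proj 0 1)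
           (computes_comp1 CSucc S _ _ 3 computes_succ (computes_proj 1 3)));
    reflexivity.
Qed.

Definition mul_code := CPrec CZero (CComp add_code [CProj 1; CProj 2]).
Lemma computes_mul : computes2 mul_code Nat.mul.
Proof.
  apply (computes2_prec _ _ (fun _ => 0) (fun _ r n => r + n)).
  - apply computes_zero.
  - exact (computes_comp2 _ _ _ _ _ _ 3 computes_add (computes_proj 1 3) (computes_proj 2 3)).
  - reflexivity.
  - intros; simpl; lia.
Qed.

Definition pred_code := CPrec CZero (CProj 0).
Lemma computes_pred : computes1 pred_code Nat.pred.
Proof.
  apply (computes1_prec _ _ 0 (fun j _ => j));
    [apply computes_zero | apply computes_proj | reflexivity | reflexivity].
Qed.

Definition sub_code :=
  CComp (CPrec (CProj 0) (CComp pred_code [CProj 1])) [CProj 1; CProj 0].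
Lemma computes_sub : computes2 sub_code Nat.sub.
Proof.
  assert (Hsubr : computes2 (CPrec (CProj 0) (CComp pred_code [CProj 1])) (fun y x => x - y)).
  { apply (computes2_prec _ _ (fun n => n) (fun _ r _ => Nat.pred r)).
    - apply computes_proj.
    - exact (computes_comp1 _ _ _ _ 3 computes_pred (computes_proj 1 3)).
    - intros; lia.
    - intros; lia. }
  exact (computes_comp2 _ _ _ _ _ _ 2 Hsubr (computes_proj 1 2) (computes_proj 0 2)).
Qed.

Fixpoint parity (n : nat) : nat := match n with 0 => 0 | S n' => 1 - parity n' end.
Fixpoint half (n : nat) : nat := match n with 0 => 0 | S n' => half n' + parity n' end.

Lemma parity_S n : parity (S n) = 1 - parity n.
Proof. reflexivity. Qed.

Lemma half_S n : half (S n) = half n + parity n.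
Proof. reflexivity. Qed.

Lemma parity_le1 n : parity n <= 1.
Proof. destruct n; [simpl|rewrite parity_S]; lia. Qed.

Lemma half_parity n : 2 * half n + parity n = n.
Proof.
  induction n as [|n IH]; [reflexivity|].
  rewrite half_S, parity_S. pose proof (parity_le1 n). lia.
Qed.

Lemma parity_double c : parity (2 * c) = 0 /\ parity (S (2 * c)) = 1.
Proof.
  induction c as [|c [IH0 IH1]]; [split; reflexivity|].
  replace (2 * S c) with (S (S (2 * c))) by lia. rewrite !parity_S, IH0. split; reflexivity.
Qed.

Lemma half_double c : half (2 * c) = c /\ half (S (2 * c)) = c.
Proof.
  destruct (parity_double c) as [E0 E1].
  pose proof (half_parity (2 * c)) as H0. pose proof (half_parity (S (2 * c))) as H1. lia.
Qed.

Definition parity_code := CPrec CZero (CComp sub_code [const_code 1; CProj 1]).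
Lemma computes_parity : computes1 parity_code parity.
Proof.
  apply (computes1_prec _ _ 0 (fun _ r => 1 - r)); [apply computes_zero | | reflexivity ..].
  exact (computes_comp2 _ _ _ _ _ _ 2 computes_sub (computes_const 1 2) (computes_proj 1 2)).
Qed.

Definition half_code := CPrec CZero (CComp add_code [CProj 1; CComp parity_code [CProj 0]]).
Lemma computes_half : computes1 half_code half.
Proof.
  apply (computes1_prec _ _ 0 (fun j r => r + parity j)); [apply computes_zero | | reflexivity ..].
  exact (computes_comp2 _ _ _ _ _ _ 2 computes_add (computes_proj 1 2)
           (computes_comp1 _ _ _ _ 2 computes_parity (computes_proj 0 2))).
Qed.

Definition pow2_code := CPrec (const_code 1) (CComp add_code [CProj 1; CProj 1]).
Lemma computes_pow2 : computes1 pow2_code (fun j => 2 ^ j).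
Proof.
  apply (computes1_prec _ _ 1 (fun _ r => r + r)); [apply computes_const | | reflexivity | ].
  - exact (computes_comp2 _ _ _ _ _ _ 2 computes_add (computes_proj 1 2) (computes_proj 1 2)).
  - intros; simpl; lia.
Qed.

Definition if_pos (c x y : nat) : nat := match c with 0 => y | S _ => x end.
Lemma if_pos_pos c x y : 0 < c -> if_pos c x y = x.
Proof. destruct c; [lia | reflexivity]. Qed.

Definition if_pos_code := CPrec (CProj 1) (CProj 2).
Lemma computes_if_pos : computes3 if_pos_code if_pos.
Proof. apply (computes_prec _ _ 2 _ _ _ (computes_proj 1 2) (computes_proj 2 4)); reflexivity. Qed.

Definition le_ind (x y : nat) : nat := 1 - (x - y).
Definition le_ind_code := CComp sub_code [const_code 1; sub_code].
Lemma computes_le_ind : computes2 le_ind_code le_ind.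
Proof. exact (computes_comp2 _ _ _ _ _ _ 2 computes_sub (computes_const 1 2) computes_sub). Qed.

Lemma le_ind_spec x y : le_ind x y <> 0 <-> x <= y.
Proof. unfold le_ind. lia. Qed.

(** * Coding situations by natural numbers *)

(** [code_sit] writes the first letter of a situation as the least significant digit. *)
Definition code_tail (n : nat) : nat := half (Nat.pred n).
Definition code_drop (j n : nat) : nat := Nat.iter j code_tail n.
Definition code_take (j n : nat) : nat := n - 2 ^ j * code_drop j n.
Definition code_head (n : nat) : nat := if_pos n (1 - parity n) 0.

Lemma code_sit_cons b t : code_sit (b :: t) = 2 * code_sit t + (if b then 2 else 1).
Proof. reflexivity. Qed.

Lemma code_sit_cons_pos b t : 0 < code_sit (b :: t).
Proof. rewrite code_sit_cons. destruct b; lia. Qed.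

Lemma code_sit_app u w : code_sit (u ++ w) = code_sit u + 2 ^ length u * code_sit w.
Proof.
  induction u as [|b u IH]; simpl app; [simpl; lia|].
  simpl length. rewrite !code_sit_cons, IH, Nat.pow_succ_r'. destruct b; lia.
Qed.

Lemma length_le_code_sit u : length u <= code_sit u.
Proof. induction u as [|b u IH]; simpl length; [lia|]. rewrite code_sit_cons. destruct b; lia. Qed.

Lemma code_tail_sit u : code_tail (code_sit u) = code_sit (tl u).
Proof.
  destruct u as [|b t]; [reflexivity|]. unfold code_tail. rewrite code_sit_cons.
  destruct (half_double (code_sit t)) as [E0 E1].
  destruct b; [replace (Nat.pred _) with (S (2 * code_sit t)) by lia
              | replace (Nat.pred _) with (2 * code_sit t) by lia]; assumption.
Qed.

Lemma code_drop_sit j u : code_drop j (code_sit u) = code_sit (skipn j u).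
Proof.
  revert u. induction j as [|j IH]; intro u; [reflexivity|].
  unfold code_drop. rewrite Nat.iter_succ_r. fold (code_drop j (code_tail (code_sit u))).
  rewrite code_tail_sit, IH. destruct u; simpl; [rewrite skipn_nil|]; reflexivity.
Qed.

Lemma code_take_sit j u : code_take j (code_sit u) = code_sit (firstn j u).
Proof.
  unfold code_take. rewrite code_drop_sit.
  rewrite <- (firstn_skipn j u) at 1. rewrite code_sit_app.
  destruct (le_lt_dec j (length u)).
  - rewrite length_firstn, Nat.min_l by lia. lia.
  - rewrite (skipn_all2 u) by lia. simpl. lia.
Qed.

Lemma code_head_cons b t : code_head (code_sit (b :: t)) = Nat.b2n b.
Proof.
  unfold code_head. rewrite if_pos_pos by apply code_sit_cons_pos. rewrite code_sit_cons.
  destruct b; simpl Nat.b2n.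
  - replace (2 * code_sit t + 2) with (2 * S (code_sit t)) by lia.
    rewrite (proj1 (parity_double _)). reflexivity.
  - rewrite Nat.add_1_r, (proj2 (parity_double _)). reflexivity.
Qed.

Section PrefixProduct.
Variable G : nat -> nat -> nat.

Definition prefix_factor (j n : nat) : nat :=
  if_pos (code_drop j n) (G (code_take j n) (code_head (code_drop j n))) 1.

Fixpoint prefix_prod_upto (j n : nat) : nat :=
  match j with 0 => 1 | S j' => prefix_prod_upto j' n * prefix_factor j' n end.

Definition prefix_prod (n : nat) : nat := prefix_prod_upto n n.

Lemma prefix_factor_sit j u :
  prefix_factor j (code_sit u) =
  match skipn j u with [] => 1 | x :: _ => G (code_sit (firstn j u)) (Nat.b2n x) end.
Proof.
  unfold prefix_factor. rewrite code_drop_sit, code_take_sit.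
  destruct (skipn j u) as [|x t]; [reflexivity|].
  rewrite code_head_cons, if_pos_pos by apply code_sit_cons_pos. reflexivity.
Qed.

Lemma prefix_prod_upto_beyond u j :
  length u <= j -> prefix_prod_upto j (code_sit u) = prefix_prod_upto (length u) (code_sit u).
Proof.
  induction 1 as [|j Hj IH]; [reflexivity|]. simpl.
  rewrite prefix_factor_sit, skipn_all2 by lia. lia.
Qed.

Lemma prefix_prod_sit u : prefix_prod (code_sit u) = prefix_prod_upto (length u) (code_sit u).
Proof. apply prefix_prod_upto_beyond, length_le_code_sit. Qed.

Lemma prefix_prod_upto_snoc s x j :
  j <= length s -> prefix_prod_upto j (code_sit (s ++ [x])) = prefix_prod_upto j (code_sit s).
Proof.
  induction j as [|j IH]; intro Hj; [reflexivity|]. simpl. rewrite IH by lia. f_equal.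
  rewrite !prefix_factor_sit, firstn_app, skipn_app.
  replace (j - length s) with 0 by lia. rewrite app_nil_r.
  destruct (skipn j s) eqn:E; [|reflexivity].
  apply (f_equal (@length bool)) in E. rewrite length_skipn in E. simpl in E. lia.
Qed.

Lemma prefix_prod_nil : prefix_prod (code_sit []) = 1.
Proof. reflexivity. Qed.

Lemma prefix_prod_snoc s x :
  prefix_prod (code_sit (s ++ [x])) = prefix_prod (code_sit s) * G (code_sit s) (Nat.b2n x).
Proof.
  rewrite !prefix_prod_sit, length_app, Nat.add_1_r. simpl.
  rewrite prefix_prod_upto_snoc by lia. f_equal.
  rewrite prefix_factor_sit, firstn_app, skipn_app, firstn_all, skipn_all, Nat.sub_diag.
  simpl. rewrite app_nil_r. reflexivity.
Qed.

Lemma prefix_prod_ge1 : (forall d b, 1 <= G d b) -> forall n, 1 <= prefix_prod n.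
Proof.
  intros HG n. unfold prefix_prod. generalize n at 1 as j. induction j as [|j IH]; simpl; [lia|].
  assert (1 <= prefix_factor j n) by (unfold prefix_factor; destruct code_drop; simpl; auto).
  nia.
Qed.
End PrefixProduct.

Definition code_tail_code := CComp half_code [pred_code].
Lemma computes_code_tail : computes1 code_tail_code code_tail.
Proof. exact (computes_comp1 _ _ _ _ 1 computes_half computes_pred). Qed.

Definition code_drop_code := CPrec (CProj 0) (CComp code_tail_code [CProj 1]).
Lemma computes_code_drop : computes2 code_drop_code code_drop.
Proof.
  apply (computes2_prec _ _ (fun n => n) (fun _ r _ => code_tail r));
    [apply computes_proj | | reflexivity ..].
  exact (computes_comp1 _ _ _ _ 3 computes_code_tail (computes_proj 1 3)).
Qed.

Definition code_take_code :=
  CComp sub_code [CProj 1; CComp mul_code [CComp pow2_code [CProj 0]; code_drop_code]].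
Lemma computes_code_take : computes2 code_take_code code_take.
Proof.
  exact (computes_comp2 _ _ _ _ _ _ 2 computes_sub (computes_proj 1 2)
           (computes_comp2 _ _ _ _ _ _ 2 computes_mul
              (computes_comp1 _ _ _ _ 2 computes_pow2 (computes_proj 0 2)) computes_code_drop)).
Qed.

Definition code_head_code :=
  CComp if_pos_code [CProj 0; CComp sub_code [const_code 1; parity_code]; const_code 0].
Lemma computes_code_head : computes1 code_head_code code_head.
Proof.
  exact (computes_comp3 _ _ _ _ _ _ _ _ 1 computes_if_pos (computes_proj 0 1)
           (computes_comp2 _ _ _ _ _ _ 1 computes_sub (computes_const 1 1) computes_parity)
           (computes_const 0 1)).
Qed.

Section PrefixProductCode.
Variables (cG : code) (G : nat -> nat -> nat).
Hypothesis cG_G : computes2 cG G.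

Definition prefix_factor_code :=
  CComp if_pos_code
    [code_drop_code; CComp cG [code_take_code; CComp code_head_code [code_drop_code]];
     const_code 1].
Lemma computes_prefix_factor : computes2 prefix_factor_code (prefix_factor G).
Proof.
  exact (computes_comp3 _ _ _ _ _ _ _ _ 2 computes_if_pos computes_code_drop
           (computes_comp2 _ _ _ _ _ _ 2 cG_G computes_code_take
              (computes_comp1 _ _ _ _ 2 computes_code_head computes_code_drop))
           (computes_const 1 2)).
Qed.

Definition prefix_prod_upto_code :=
  CPrec (const_code 1) (CComp mul_code [CProj 1; CComp prefix_factor_code [CProj 0; CProj 2]]).
Lemma computes_prefix_prod_upto : computes2 prefix_prod_upto_code (prefix_prod_upto G).
Proof.
  apply (computes2_prec _ _ (fun _ => 1) (fun j r n => r * prefix_factor G j n));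
    [apply computes_const | | reflexivity ..].
  exact (computes_comp2 _ _ _ _ _ _ 3 computes_mul (computes_proj 1 3)
           (computes_comp2 _ _ _ _ _ _ 3 computes_prefix_factor (computes_proj 0 3)
              (computes_proj 2 3))).
Qed.

Definition prefix_prod_code := CComp prefix_prod_upto_code [CProj 0; CProj 0].
Lemma computes_prefix_prod : computes1 prefix_prod_code (prefix_prod G).
Proof.
  exact (computes_comp2 _ _ _ _ _ _ 1 computes_prefix_prod_upto (computes_proj 0 1)
           (computes_proj 0 1)).
Qed.
End PrefixProductCode.

(** * Enumerating the test processes of a class *)

Definition cons_nat (x l : nat) : nat := S (Cantor.to_nat (x, l)).

Fixpoint code_nat (c : code) : nat :=
  match c with
  | CZero => Cantor.to_nat (0, 0)
  | CSucc => Cantor.to_nat (1, 0)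
  | CProj i => Cantor.to_nat (2, i)
  | CComp f gs =>
      Cantor.to_nat (3, Cantor.to_nat (code_nat f,
        fold_right (fun g acc => cons_nat (code_nat g) acc) 0 gs))
  | CPrec f g => Cantor.to_nat (4, Cantor.to_nat (code_nat f, code_nat g))
  | CMu f => Cantor.to_nat (5, code_nat f)
  end.

Lemma cantor_to_nat_inj p p' : Cantor.to_nat p = Cantor.to_nat p' -> p = p'.
Proof.
  intro H. rewrite <- (Cantor.cancel_of_to p), <- (Cantor.cancel_of_to p'), H. reflexivity.
Qed.

Lemma cons_nat_inj x l x' l' : cons_nat x l = cons_nat x' l' -> x = x' /\ l = l'.
Proof. intro E. apply Nat.succ_inj in E. now apply cantor_to_nat_inj, pair_equal_spec in E. Qed.

Lemma code_nat_inj c c' : code_nat c = code_nat c' -> c = c'.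
Proof.
  revert c'.
  induction c as [| | i | f gs IHf IHgs | f g IHf IHg | f IHf] using code_nested_ind;
    intros [| | i' | f' gs' | f' g' | f'] E; cbn -[Cantor.to_nat cons_nat] in E;
    apply cantor_to_nat_inj, pair_equal_spec in E as [Etag E]; try discriminate; subst; auto.
  - apply cantor_to_nat_inj, pair_equal_spec in E as [Ef Egs]. f_equal; [now apply IHf|].
    revert gs' Egs. induction IHgs as [|g gs IHg _ IH]; intros [|g' gs'] E;
      cbn -[Cantor.to_nat cons_nat] in E; try discriminate; [reflexivity|].
    apply cons_nat_inj in E as [Eg Egs].
    f_equal; auto.
  - apply cantor_to_nat_inj, pair_equal_spec in E as [Ef Eg]. f_equal; auto.
  - f_equal; auto.
Qed.

Open Scope R_scope.

(** A code triple for a rational map [q = (a - b) / (d + 1)]. *)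
Definition rat_code := (code * code * code)%type.

Definition rat_code_nat (c : rat_code) : nat :=
  let '(ca, cb, cd) := c in
  Cantor.to_nat (code_nat ca, Cantor.to_nat (code_nat cb, code_nat cd)).

Lemma rat_code_nat_inj c c' : rat_code_nat c = rat_code_nat c' -> c = c'.
Proof.
  destruct c as [[ca cb] cd], c' as [[ca' cb'] cd']; cbn -[Cantor.to_nat]; intro E.
  apply cantor_to_nat_inj, pair_equal_spec in E as [Ea E].
  apply cantor_to_nat_inj, pair_equal_spec in E as [Eb Ed].
  apply code_nat_inj in Ea, Eb, Ed. congruence.
Qed.

Definition rat_computed_by (c : rat_code) (k : nat) (q : list nat -> R) : Prop :=
  let '(ca, cb, cd) := c in
  exists a b d, computes ca k a /\ computes cb k b /\ computes cd k d /\
    forall v, length v = k -> q v = (INR (a v) - INR (b v)) / (INR (d v) + 1).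

Lemma rat_computed_by_functional c k q q' :
  rat_computed_by c k q -> rat_computed_by c k q' -> forall v, length v = k -> q v = q' v.
Proof.
  destruct c as [[ca cb] cd].
  intros (a & b & d & Ha & Hb & Hd & Hq) (a' & b' & d' & Ha' & Hb' & Hd' & Hq') v L.
  rewrite Hq, Hq' by exact L.
  rewrite (computes_functional _ _ _ _ Ha Ha' v L), (computes_functional _ _ _ _ Hb Hb' v L),
    (computes_functional _ _ _ _ Hd Hd' v L).
  reflexivity.
Qed.

Lemma rat_recursive_computed_by k q : rat_recursive k q -> exists c, rat_computed_by c k q.
Proof.
  intros (a & b & d & [ca Ha] & [cb Hb] & [cd Hd] & Hq).
  exists (ca, cb, cd), a, b, d. auto.
Qed.

Definition represents (Rt : rtype) (c : rat_code) (T : process) : Prop :=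
  match Rt with
  | ML => exists q, rat_computed_by c 2 q /\ forall s, Un_cv (fun n => q (enc_S s ++ [n])) (T s)
  | wML => exists D q, rat_computed_by c 3 q /\
      (forall d, Un_cv (fun n => q (enc_SB d ++ [n])) (D (fst d) (snd d))) /\ generated_by D T
  | Cr | Sr => exists q, rat_computed_by c 1 q /\ forall s, T s = q (enc_S s)
  end.

Lemma represents_functional Rt c T T' : represents Rt c T -> represents Rt c T' -> T = T'.
Proof.
  intros H H'. apply functional_extensionality. intro s.
  destruct Rt; simpl in H, H'.
  - destruct H as (q & Hc & Hl), H' as (q' & Hc' & Hl').
    eapply UL_sequence; [apply Hl|]. eapply Un_cv_ext; [|apply Hl'].
    intro n. now apply (rat_computed_by_functional _ _ _ _ Hc' Hc).
  - destruct H as (D & q & Hc & Hl & G0 & GS), H' as (D' & q' & Hc' & Hl' & G0' & GS').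
    assert (ED : forall s x, D s x = D' s x).
    { intros s0 x. eapply UL_sequence; [apply (Hl (s0, x))|].
      eapply Un_cv_ext; [|apply (Hl' (s0, x))].
      intro n. now apply (rat_computed_by_functional _ _ _ _ Hc' Hc). }
    induction s as [|x s IH] using rev_ind; [congruence|]. now rewrite GS, GS', IH, ED.
  - destruct H as (q & Hc & E), H' as (q' & Hc' & E'). rewrite E, E'.
    now apply (rat_computed_by_functional _ _ _ _ Hc Hc').
  - destruct H as (q & Hc & E), H' as (q' & Hc' & E'). rewrite E, E'.
    now apply (rat_computed_by_functional _ _ _ _ Hc Hc').
Qed.

Lemma test_class_represented Rt T : test_class Rt T -> exists c, represents Rt c T.
Proof.
  destruct Rt; simpl.
  - intros [_ (q & Hq & Hl)]. destruct (rat_recursive_computed_by _ _ Hq) as [c Hc].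
    exists c, q. split; [exact Hc | intro s; apply Hl].
  - intros (D & _ & (q & Hq & Hl) & G). destruct (rat_recursive_computed_by _ _ Hq) as [c Hc].
    exists c, D, q. split; [exact Hc|]. split; [intro d; apply Hl | exact G].
  - intros (_ & _ & q & Hq & E). destruct (rat_recursive_computed_by _ _ Hq) as [c Hc]. eauto.
  - intros (_ & _ & q & Hq & E). destruct (rat_recursive_computed_by _ _ Hq) as [c Hc]. eauto.
Qed.

Section Enumeration.
Variable Rt : rtype.
Variable P : process -> Prop.
Hypothesis P_class : forall T, P T -> test_class Rt T.

Definition enum_process (i : nat) : process :=
  match excluded_middle_informative
          (exists T, P T /\ exists c, rat_code_nat c = i /\ represents Rt c T) with
  | left H => proj1_sig (constructive_indefinite_description _ H)
  | right _ => fun _ => 1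
  end.

Lemma enum_process_cases i : P (enum_process i) \/ enum_process i = (fun _ => 1).
Proof.
  unfold enum_process. destruct excluded_middle_informative as [H|H]; [left|right; reflexivity].
  exact (proj1 (proj2_sig (constructive_indefinite_description _ H))).
Qed.

Lemma enum_process_onto T : P T -> exists i, enum_process i = T.
Proof.
  intro HT. destruct (test_class_represented _ _ (P_class _ HT)) as [c Hc].
  exists (rat_code_nat c). unfold enum_process. destruct excluded_middle_informative as [H|H].
  - destruct (proj2 (proj2_sig (constructive_indefinite_description _ H))) as (c' & E & Hc').
    apply rat_code_nat_inj in E. subst c'. exact (represents_functional _ _ _ _ Hc' Hc).
  - exfalso. apply H. exists T. eauto.
Qed.
End Enumeration.

(** * A path on which countably many supermartingales stay bounded *)

Definition precise_fs (r : sit -> R) : fsys := fun s => (r s, r s).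

Lemma supermartingale_precise r F :
  supermartingale (precise_fs r) F <->
  forall s, r s * F (s ++ [true]) + (1 - r s) * F (s ++ [false]) <= F s.
Proof.
  unfold supermartingale, E_r, precise_fs. simpl. split; intros H s.
  - specialize (H s (r s) (conj (Rle_refl _) (Rle_refl _))). lra.
  - intros f Hf. replace f with (r s) by lra. specialize (H s). lra.
Qed.

Lemma supermartingale_narrow phi psi F :
  (forall s, fst (phi s) <= fst (psi s) /\ snd (psi s) <= snd (phi s)) ->
  supermartingale phi F -> supermartingale psi F.
Proof. intros Hsub H s f Hf. apply H. specialize (Hsub s). lra. Qed.

Lemma le_Series_of_nonneg (a : nat -> R) i :
  (forall n, 0 <= a n) -> ex_series a -> a i <= Series a.
Proof.
  intros Hpos Hex. apply Series_correct in Hex.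
  apply Rle_trans with (sum_n a i).
  - rewrite sum_n_Reals. destruct i as [|i]; simpl; [lra|].
    pose proof (cond_pos_sum a i Hpos). lra.
  - apply (is_lim_seq_incr_compare (sum_n a)); [exact Hex|].
    intro n. rewrite sum_Sn. unfold plus; simpl. pose proof (Hpos (S n)). lra.
Qed.

Section GreedyPath.
Variables (r : sit -> R) (c : R).
Hypothesis c_pos : 0 < c.
Hypothesis r_bounds : forall s, c <= r s <= 1 - c.
Variable F : nat -> process.
Hypothesis F_nonneg : forall i s, 0 <= F i s.
Hypothesis F_root : forall i, F i [] = 1.
Hypothesis F_super : forall i, supermartingale (precise_fs r) (F i).
Variable U : process.
Hypothesis U_nonneg : forall s, 0 <= U s.
Hypothesis U_root : U [] = 1.
Hypothesis U_super : supermartingale (precise_fs r) U.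

(** Both outcomes have probability at least [c], so one step multiplies [F i] by at most [/ c]. *)
Lemma family_le_pow i s : F i s <= (/ c) ^ length s.
Proof.
  induction s as [|x s IH] using rev_ind; [rewrite F_root; simpl; lra|].
  rewrite length_app, Nat.add_1_r. simpl pow.
  pose proof (proj1 (supermartingale_precise _ _) (F_super i) s) as Hs.
  pose proof (r_bounds s).
  pose proof (F_nonneg i (s ++ [true])). pose proof (F_nonneg i (s ++ [false])).
  assert (Hstep : c * F i (s ++ [x]) <= F i s) by (destruct x; nra).
  assert (Hinv : 0 < / c) by (apply Rinv_0_lt_compat; lra).
  replace (F i (s ++ [x])) with (/ c * (c * F i (s ++ [x]))) by (field; lra).
  apply Rmult_le_compat_l; lra.
Qed.

Definition weight (i : nat) : R := (/ 2) ^ S i.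

Lemma weight_pos i : 0 < weight i.
Proof. apply pow_lt. lra. Qed.

Lemma is_series_weight : is_series weight 1.
Proof.
  replace 1 with (scal (/ 2) (/ (1 - / 2))) by (unfold scal; simpl; unfold mult; simpl; field).
  apply (@is_series_scal_l R_AbsRing R_NormedModule). apply is_series_geom.
  rewrite Rabs_pos_eq; lra.
Qed.

Definition mixture (s : sit) : R := Series (fun i => weight i * F i s).

Lemma ex_series_mixture s : ex_series (fun i => weight i * F i s).
Proof.
  apply (@ex_series_le R_AbsRing R_CompleteNormedModule)
    with (b := fun i => (/ c) ^ length s * weight i).
  - intro n. change (Rabs (weight n * F n s) <= (/ c) ^ length s * weight n).
    pose proof (weight_pos n). pose proof (F_nonneg n s). pose proof (family_le_pow n s).
    rewrite Rabs_pos_eq by nra. nra.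
  - apply (@ex_series_scal_l R_AbsRing R_NormedModule). exists 1. exact is_series_weight.
Qed.

Lemma mixture_root : mixture [] = 1.
Proof.
  unfold mixture. rewrite <- (is_series_unique _ _ is_series_weight).
  apply Series_ext. intro n. rewrite F_root. ring.
Qed.

Lemma mixture_super : supermartingale (precise_fs r) mixture.
Proof.
  apply supermartingale_precise. intro s. unfold mixture.
  rewrite <- !Series_scal_l, <- Series_plus
    by (apply (@ex_series_scal_l R_AbsRing R_NormedModule), ex_series_mixture).
  apply Series_le; [|apply ex_series_mixture].
  intro n. pose proof (weight_pos n). pose proof (r_bounds s).
  pose proof (F_nonneg n (s ++ [true])). pose proof (F_nonneg n (s ++ [false])).
  pose proof (proj1 (supermartingale_precise _ _) (F_super n) s). split.
  - apply Rplus_le_le_0_compat; apply Rmult_le_pos; try lra; apply Rmult_le_pos; lra.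
  - replace (_ + _) with (weight n * (r s * F n (s ++ [true]) + (1 - r s) * F n (s ++ [false])))
      by ring.
    apply Rmult_le_compat_l; lra.
Qed.

Lemma weight_le_mixture i s : weight i * F i s <= mixture s.
Proof.
  apply (le_Series_of_nonneg (fun i => weight i * F i s)); [|apply ex_series_mixture].
  intro n. pose proof (weight_pos n). pose proof (F_nonneg n s). nra.
Qed.

Lemma mixture_nonneg s : 0 <= mixture s.
Proof.
  pose proof (weight_le_mixture 0 s). pose proof (weight_pos 0). pose proof (F_nonneg 0 s). nra.
Qed.

Definition potential (s : sit) : R := mixture s + U s.

Definition greedy_step (s : sit) : bool :=
  if Rle_dec (potential (s ++ [true])) (potential s) then true else false.

Fixpoint greedy_prefix (n : nat) : sit :=
  match n with 0%nat => [] | S n' => greedy_prefix n' ++ [greedy_step (greedy_prefix n')] end.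

Definition greedy_path (k : nat) : bool := greedy_step (greedy_prefix k).

Lemma prefix_greedy_path n : prefix greedy_path n = greedy_prefix n.
Proof.
  induction n as [|n IH]; [reflexivity|].
  unfold prefix in *. rewrite seq_S, map_app, IH. reflexivity.
Qed.

Lemma potential_greedy_step s : potential (s ++ [greedy_step s]) <= potential s.
Proof.
  unfold greedy_step. destruct Rle_dec as [H|H]; [exact H|].
  pose proof (proj1 (supermartingale_precise _ _) mixture_super s).
  pose proof (proj1 (supermartingale_precise _ _) U_super s).
  pose proof (r_bounds s). unfold potential in *. nra.
Qed.

Lemma potential_greedy_prefix n : potential (greedy_prefix n) <= 2.
Proof.
  induction n as [|n IH]; simpl.
  - unfold potential. rewrite mixture_root, U_root. lra.
  - eapply Rle_trans; [apply potential_greedy_step | exact IH].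
Qed.

Lemma greedy_path_bounds_extra n : U (prefix greedy_path n) <= 2.
Proof.
  rewrite prefix_greedy_path. pose proof (potential_greedy_prefix n).
  pose proof (mixture_nonneg (greedy_prefix n)). unfold potential in *. lra.
Qed.

Lemma greedy_path_bounds_family i : exists B, forall n, F i (prefix greedy_path n) <= B.
Proof.
  exists (2 / weight i). intro n. rewrite prefix_greedy_path.
  pose proof (potential_greedy_prefix n). pose proof (U_nonneg (greedy_prefix n)).
  pose proof (weight_le_mixture i (greedy_prefix n)). pose proof (weight_pos i).
  unfold potential in *. apply Rmult_le_reg_l with (weight i); [lra|].
  unfold Rdiv. rewrite (Rmult_comm 2), <- Rmult_assoc, Rinv_r; lra.
Qed.
End GreedyPath.

(** * Betting on one side of a threshold *)

Lemma nat_recursive_arg0 k c f : computes1 c f -> nat_recursive k (fun v => f (nth 0 v 0%nat)).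
Proof.
  intro Hc. exists (CComp c [CProj 0]). exact (computes_comp1 _ _ _ _ k Hc (computes_proj 0 k)).
Qed.

Lemma nat_recursive_arg01 k c f :
  computes2 c f -> nat_recursive k (fun v => f (nth 0 v 0%nat) (nth 1 v 0%nat)).
Proof.
  intro Hc. exists (CComp c [CProj 0; CProj 1]).
  exact (computes_comp2 _ _ _ _ _ _ k Hc (computes_proj 0 k) (computes_proj 1 k)).
Qed.

Lemma rat_recursive_ratio k (a d : list nat -> nat) :
  nat_recursive k a -> nat_recursive k d -> (forall v, (1 <= d v)%nat) ->
  rat_recursive k (fun v => INR (a v) / INR (d v)).
Proof.
  intros Ha [cd Hd] Hd1. exists a, (fun _ => 0%nat), (fun v => d v - 1)%nat.
  split; [exact Ha|]. split; [exists CZero; apply computes_zero|]. split.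
  - exists (CComp sub_code [cd; const_code 1]).
    exact (computes_comp2 _ _ _ _ _ _ k computes_sub Hd (computes_const 1 k)).
  - intros v _. rewrite minus_INR by apply Hd1. simpl INR. f_equal; ring.
Qed.

Lemma lower_semicomputable_of_rat {D : Type} k (enc : D -> list nat) (r : D -> R) q :
  rat_recursive (S k) q -> (forall d n, q (enc d ++ [n]) = r d) -> lower_semicomputable k enc r.
Proof.
  intros Hq E. exists q. split; [exact Hq|]. intro d. split.
  - intro n. rewrite !E. apply Rle_refl.
  - intros eps Heps. exists 0%nat. intros n _.
    unfold R_dist. rewrite E, Rminus_diag, Rabs_R0. exact Heps.
Qed.

Lemma INR_pos_of_ge1 n : (1 <= n)%nat -> 0 < INR n.
Proof. intro H. apply lt_0_INR. lia. Qed.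

Lemma div_between_inv a m : 0 < m -> 1 <= a <= m - 1 -> / m <= a / m <= 1 - / m.
Proof.
  intros Hm Ha. assert (0 < / m) by (apply Rinv_0_lt_compat; exact Hm). unfold Rdiv.
  replace (1 - / m) with ((m - 1) * / m) by (field; lra). nra.
Qed.

Lemma bet_fair a m f : 1 <= a -> a + 1 <= m -> 0 <= f -> f * m <= a ->
  f * ((a + 1) / a) + (1 - f) * ((m - a - 1) / (m - a)) <= 1.
Proof.
  intros Ha Hm Hf Hfm.
  replace (_ + _) with (1 + (f * m - a) * / (a * (m - a))) by (field; lra).
  assert (0 < / (a * (m - a))) by (apply Rinv_0_lt_compat; nra). nra.
Qed.

Lemma inverse_bet_gain a m : 1 <= a -> a + 3 <= m ->
  (a + 2) / m * (a / (a + 1)) + (1 - (a + 2) / m) * ((m - a) / (m - a - 1)) <= 1 - 4 / (m * m).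
Proof.
  intros Ha Hm. set (P := (a + 1) * (m - a - 1)).
  assert (HP : 0 < P) by (unfold P; nra).
  replace (_ + _) with (1 - / P) by (unfold P; field; lra).
  replace (1 - / P) with (1 - 4 / (m * m) - (m - 2 * (a + 1)) ^ 2 / (P * (m * m)))
    by (unfold P; field; lra).
  assert (0 <= (m - 2 * (a + 1)) ^ 2 / (P * (m * m)))
    by (apply Rdiv_le_0_compat; [apply pow2_ge_0 | apply Rmult_lt_0_compat; nra]).
  lra.
Qed.

Definition threshold_decider (J M : nat) (phi : fsys) (dn : nat -> nat) : Prop :=
  forall s, (dn (code_sit s) <> 0%nat -> fst (phi s) * INR M <= INR J + 1) /\
            (dn (code_sit s) = 0%nat -> INR J - 1 <= fst (phi s) * INR M).

Section Strategy.
Variables J M : nat.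
Hypothesis J_ge : (4 <= J)%nat.
Hypothesis M_ge : (J + 4 <= M)%nat.
Variable dn : nat -> nat.

Lemma INR_J_ge : 4 <= INR J.
Proof. apply le_INR in J_ge. simpl in J_ge. lra. Qed.

Lemma INR_M_ge : INR J + 4 <= INR M.
Proof. apply le_INR in M_ge. rewrite plus_INR in M_ge. simpl in M_ge. lra. Qed.

(** If [dn] flags [s], bet slightly on [true], otherwise slightly on [false]; the factors are
    ratios of naturals so that [bet] is rational recursive. *)
Definition bet_choice (a b c e d x : nat) : nat := if_pos (dn d) (if_pos x a b) (if_pos x c e).
Definition bet_num := bet_choice (J + 2) (M - J - 2) (J - 2) (M - J + 2).
Definition bet_den := bet_choice (J + 1) (M - J - 1) (J - 1) (M - J + 1).

Definition bet_factor (s : sit) (x : bool) : R :=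
  INR (bet_num (code_sit s) (Nat.b2n x)) / INR (bet_den (code_sit s) (Nat.b2n x)).

Definition bet (s : sit) : R :=
  INR (prefix_prod bet_num (code_sit s)) / INR (prefix_prod bet_den (code_sit s)).

Lemma bet_choice_ge1 a b c e d x :
  (1 <= a)%nat -> (1 <= b)%nat -> (1 <= c)%nat -> (1 <= e)%nat -> (1 <= bet_choice a b c e d x)%nat.
Proof. intros. unfold bet_choice. destruct (dn d), x; simpl; assumption. Qed.

Lemma bet_num_ge1 d x : (1 <= bet_num d x)%nat.
Proof. apply bet_choice_ge1; lia. Qed.

Lemma bet_den_ge1 d x : (1 <= bet_den d x)%nat.
Proof. apply bet_choice_ge1; lia. Qed.

Lemma bet_factor_pos s x : 0 < bet_factor s x.
Proof. apply Rdiv_lt_0_compat; apply INR_pos_of_ge1; [apply bet_num_ge1 | apply bet_den_ge1]. Qed.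

Lemma bet_pos s : 0 < bet s.
Proof.
  apply Rdiv_lt_0_compat; apply INR_pos_of_ge1, prefix_prod_ge1;
    [apply bet_num_ge1 | apply bet_den_ge1].
Qed.

Lemma bet_root : bet [] = 1.
Proof. unfold bet. rewrite !prefix_prod_nil. simpl. field. Qed.

Lemma bet_snoc s x : bet (s ++ [x]) = bet s * bet_factor s x.
Proof.
  unfold bet, bet_factor. rewrite !prefix_prod_snoc, !mult_INR.
  pose proof (INR_pos_of_ge1 _ (prefix_prod_ge1 _ bet_den_ge1 (code_sit s))).
  pose proof (INR_pos_of_ge1 _ (bet_den_ge1 (code_sit s) (Nat.b2n x))).
  field. lra.
Qed.

Lemma bet_test_process : test_process bet.
Proof. split; [intro s; left; apply bet_pos | apply bet_root]. Qed.

Lemma bet_factor_low s : dn (code_sit s) <> 0%nat ->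
  bet_factor s true = (INR J + 1 + 1) / (INR J + 1) /\
  bet_factor s false = (INR M - (INR J + 1) - 1) / (INR M - (INR J + 1)).
Proof.
  intro H. unfold bet_factor, bet_num, bet_den, bet_choice.
  destruct (dn (code_sit s)); [contradiction|]. simpl.
  rewrite !minus_INR by lia. rewrite !plus_INR. simpl. split; f_equal; ring.
Qed.

Lemma bet_factor_high s : dn (code_sit s) = 0%nat ->
  bet_factor s false = (INR M - INR J + 1 + 1) / (INR M - INR J + 1) /\
  bet_factor s true = (INR M - (INR M - INR J + 1) - 1) / (INR M - (INR M - INR J + 1)).
Proof.
  intro H. unfold bet_factor, bet_num, bet_den, bet_choice. rewrite H. simpl.
  rewrite !plus_INR, !minus_INR by lia. simpl. split; f_equal; ring.
Qed.

Lemma bet_step_fair s f : 0 <= f <= 1 ->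
  (dn (code_sit s) <> 0%nat -> f * INR M <= INR J + 1) ->
  (dn (code_sit s) = 0%nat -> INR J - 1 <= f * INR M) ->
  E_r f (fun x => bet (s ++ [x]) - bet s) <= 0.
Proof.
  intros Hf Hlow Hhigh. pose proof INR_J_ge. pose proof INR_M_ge. pose proof (bet_pos s).
  unfold E_r. rewrite !bet_snoc.
  enough (f * bet_factor s true + (1 - f) * bet_factor s false <= 1) by nra.
  destruct (Nat.eq_dec (dn (code_sit s)) 0) as [E|E].
  - destruct (bet_factor_high s E) as [-> ->]. specialize (Hhigh E).
    pose proof (bet_fair (INR M - INR J + 1) (INR M) (1 - f)) as Hfair.
    specialize (Hfair ltac:(lra) ltac:(lra) ltac:(lra) ltac:(lra)). lra.
  - destruct (bet_factor_low s E) as [-> ->].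
    apply bet_fair; [lra | lra | lra | auto].
Qed.

Lemma bet_super phi : forecasting_system phi -> precise phi -> threshold_decider J M phi dn ->
  supermartingale phi bet.
Proof.
  intros Hfs Hpr Hdec s f Hf. rewrite <- (Hpr s) in Hf.
  replace f with (fst (phi s)) by lra. pose proof (Hfs s). rewrite <- (Hpr s) in *.
  apply bet_step_fair; [lra | apply Hdec ..].
Qed.

(** A forecast under which [bet] wins at the exponential rate [bet_gain]. *)
Definition winning_forecast (s : sit) : R :=
  if Nat.eqb (dn (code_sit s)) 0 then (INR J - 3) / INR M else (INR J + 3) / INR M.

Definition bet_gain : R := / (1 - 4 / (INR M * INR M)).

Definition inverse_bet (s : sit) : R := bet_gain ^ length s / bet s.

Lemma winning_forecast_bounds s : / INR M <= winning_forecast s <= 1 - / INR M.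
Proof.
  pose proof INR_J_ge. pose proof INR_M_ge.
  unfold winning_forecast. destruct Nat.eqb; apply div_between_inv; lra.
Qed.

Lemma winning_forecast_in p q s : p <= (INR J - 3) / INR M -> (INR J + 3) / INR M <= q ->
  p <= winning_forecast s <= q.
Proof.
  intros Hp Hq. pose proof INR_J_ge. pose proof INR_M_ge.
  assert ((INR J - 3) / INR M <= (INR J + 3) / INR M).
  { unfold Rdiv. apply Rmult_le_compat_r; [left; apply Rinv_0_lt_compat|]; lra. }
  unfold winning_forecast. destruct Nat.eqb; lra.
Qed.

Lemma gain_base_bounds : 0 < 1 - 4 / (INR M * INR M) < 1.
Proof.
  pose proof INR_J_ge. pose proof INR_M_ge.
  assert (0 < 4 / (INR M * INR M) < 1); [|lra].
  split; [apply Rdiv_lt_0_compat; nra|].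
  apply Rmult_lt_reg_r with (INR M * INR M); [nra|]. unfold Rdiv.
  rewrite Rmult_assoc, Rinv_l by nra. nra.
Qed.

Lemma bet_gain_gt1 : 1 < bet_gain.
Proof.
  pose proof gain_base_bounds. unfold bet_gain. rewrite <- Rinv_1. apply Rinv_lt_contravar; lra.
Qed.

Lemma inverse_bet_root : inverse_bet [] = 1.
Proof. unfold inverse_bet. rewrite bet_root. simpl. field. Qed.

Lemma inverse_bet_nonneg s : 0 <= inverse_bet s.
Proof.
  pose proof bet_gain_gt1. pose proof (bet_pos s).
  apply Rmult_le_pos; [apply pow_le; lra | left; apply Rinv_0_lt_compat; lra].
Qed.

Lemma inverse_bet_step s :
  winning_forecast s * / bet_factor s true + (1 - winning_forecast s) * / bet_factor s false
  <= 1 - 4 / (INR M * INR M).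
Proof.
  pose proof INR_J_ge. pose proof INR_M_ge.
  unfold winning_forecast. destruct (Nat.eqb_spec (dn (code_sit s)) 0) as [E|E].
  - destruct (bet_factor_high s E) as [-> ->]. rewrite !Rinv_div.
    pose proof (inverse_bet_gain (INR M - INR J + 1) (INR M) ltac:(lra) ltac:(lra)) as G.
    replace (INR M - INR J + 1 + 2) with (INR M - (INR J - 3)) in G by ring.
    replace ((INR M - (INR J - 3)) / INR M) with (1 - (INR J - 3) / INR M) in G by (field; lra).
    replace (1 - (1 - (INR J - 3) / INR M)) with ((INR J - 3) / INR M) in G by ring.
    lra.
  - destruct (bet_factor_low s E) as [-> ->]. rewrite !Rinv_div.
    pose proof (inverse_bet_gain (INR J + 1) (INR M) ltac:(lra) ltac:(lra)) as G.
    replace (INR J + 1 + 2) with (INR J + 3) in G by ring.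
    lra.
Qed.

Lemma inverse_bet_super : supermartingale (precise_fs winning_forecast) inverse_bet.
Proof.
  apply supermartingale_precise. intro s. unfold inverse_bet.
  rewrite !bet_snoc, !length_app. simpl length. rewrite !Nat.add_1_r. simpl pow.
  pose proof (bet_pos s). pose proof (bet_factor_pos s true). pose proof (bet_factor_pos s false).
  pose proof bet_gain_gt1. pose proof (inverse_bet_step s). pose proof (winning_forecast_bounds s).
  assert (0 < bet_gain ^ length s / bet s) by (apply Rdiv_lt_0_compat; [apply pow_lt|]; lra).
  replace (_ + _) with (bet_gain ^ length s / bet s *
    (bet_gain * (winning_forecast s * / bet_factor s true
                 + (1 - winning_forecast s) * / bet_factor s false))) by (field; lra).
  enough (bet_gain * (winning_forecast s * / bet_factor s true
                      + (1 - winning_forecast s) * / bet_factor s false) <= 1) by nra.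
  pose proof gain_base_bounds. unfold bet_gain.
  apply Rmult_le_reg_l with (1 - 4 / (INR M * INR M)); [lra|].
  rewrite <- Rmult_assoc, Rinv_r; lra.
Qed.

Lemma bet_ge_of_inverse_bet_le s : inverse_bet s <= 2 -> bet_gain ^ length s / 2 <= bet s.
Proof.
  unfold inverse_bet. intro H. pose proof (bet_pos s).
  apply Rmult_le_compat_r with (r := bet s) in H; [|lra].
  unfold Rdiv in *. rewrite Rmult_assoc, Rinv_l in H; lra.
Qed.
Section Computable.
Variable cd : code.
Hypothesis cd_dn : computes1 cd dn.

Definition bet_choice_code (a b c e : nat) : code :=
  CComp if_pos_code [CComp cd [CProj 0];
                     CComp if_pos_code [CProj 1; const_code a; const_code b];
                     CComp if_pos_code [CProj 1; const_code c; const_code e]].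

Lemma computes_bet_choice a b c e : computes2 (bet_choice_code a b c e) (bet_choice a b c e).
Proof.
  exact (computes_comp3 _ _ _ _ _ _ _ _ 2 computes_if_pos
           (computes_comp1 _ _ _ _ 2 cd_dn (computes_proj 0 2))
           (computes_comp3 _ _ _ _ _ _ _ _ 2 computes_if_pos (computes_proj 1 2)
              (computes_const a 2) (computes_const b 2))
           (computes_comp3 _ _ _ _ _ _ _ _ 2 computes_if_pos (computes_proj 1 2)
              (computes_const c 2) (computes_const e 2))).
Qed.

Lemma bet_rat k : rat_recursive k (fun v =>
  INR (prefix_prod bet_num (nth 0 v 0%nat)) / INR (prefix_prod bet_den (nth 0 v 0%nat))).
Proof.
  apply rat_recursive_ratio; [| | intro; apply prefix_prod_ge1, bet_den_ge1];
    eapply nat_recursive_arg0; apply computes_prefix_prod, computes_bet_choice.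
Qed.

Lemma bet_factor_rat k : rat_recursive k (fun v =>
  INR (bet_num (nth 0 v 0%nat) (nth 1 v 0%nat)) / INR (bet_den (nth 0 v 0%nat) (nth 1 v 0%nat))).
Proof.
  apply rat_recursive_ratio; [| | intro; apply bet_den_ge1];
    eapply nat_recursive_arg01; apply computes_bet_choice.
Qed.

Lemma bet_test_class Rt : test_class Rt bet.
Proof.
  destruct Rt; simpl.
  - split; [exact bet_test_process|].
    apply lower_semicomputable_of_rat with (1 := bet_rat 2). reflexivity.
  - exists bet_factor. split; [intros s x; left; apply bet_factor_pos|]. split.
    + apply lower_semicomputable_of_rat with (1 := bet_factor_rat 3). intros [s x] n. reflexivity.
    + split; [exact bet_root | exact bet_snoc].
  - split; [exact bet_test_process|]. split; [exact bet_pos|].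
    eexists. split; [apply bet_rat | reflexivity].
  - split; [exact bet_test_process|]. split; [exact bet_pos|].
    eexists. split; [apply bet_rat | reflexivity].
Qed.
End Computable.
End Strategy.

(** * A path random for the interval but not for the forecasting system *)

Lemma LimSup_seq_unbounded (u : nat -> R) :
  (forall Mx N, exists n, (N <= n)%nat /\ Mx < u n) -> LimSup_seq u = p_infty.
Proof. intro H. apply is_LimSup_seq_unique. exact H. Qed.

Lemma LimSup_seq_le_bound (u : nat -> R) B N :
  (forall n, (N <= n)%nat -> u n <= B) -> Rbar_le (LimSup_seq u) B.
Proof.
  intro H. rewrite <- (LimSup_seq_const B). apply LimSup_le. exists N. exact H.
Qed.

Lemma pow_ge_binomial2 h n :
  0 <= h -> 1 + INR n * h + INR n * (INR n - 1) / 2 * h ^ 2 <= (1 + h) ^ n.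
Proof.
  intro Hh. induction n as [|n IH]; [simpl; lra|].
  rewrite S_INR. simpl pow. pose proof (pos_INR n).
  assert (0 <= INR n * (INR n - 1) * h ^ 3).
  { destruct n as [|n]; [simpl; lra|]. rewrite S_INR. pose proof (pos_INR n).
    apply Rmult_le_pos; [nra | apply pow_le; exact Hh]. }
  apply Rle_trans with ((1 + h) * (1 + INR n * h + INR n * (INR n - 1) / 2 * h ^ 2)); [nra|].
  apply Rmult_le_compat_l; lra.
Qed.

Lemma pow_half_minus_linear_unbounded g : 1 < g ->
  forall Mx N, exists n, (N <= n)%nat /\ Mx < g ^ n / 2 - INR n.
Proof.
  intros Hg Mx N. set (h := g - 1). assert (Hh : 0 < h) by (unfold h; lra).
  destruct (INR_unbounded (Rmax (16 / h ^ 2) (Rabs Mx + 2))) as [K HK].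
  exists (Nat.max N K). split; [lia|]. set (n := Nat.max N K).
  assert (HnK : INR K <= INR n) by (apply le_INR; lia).
  pose proof (Rmax_l (16 / h ^ 2) (Rabs Mx + 2)). pose proof (Rmax_r (16 / h ^ 2) (Rabs Mx + 2)).
  assert (Hnh : 16 <= INR n * h ^ 2).
  { replace 16 with (16 / h ^ 2 * h ^ 2) by (field; lra).
    apply Rmult_le_compat_r; [apply pow_le|]; lra. }
  pose proof (pow_ge_binomial2 h n (Rlt_le _ _ Hh)) as B.
  replace (1 + h) with g in B by (unfold h; ring).
  pose proof (Rle_abs Mx).
  assert (0 <= INR n * h) by (apply Rmult_le_pos; [apply pos_INR | lra]).
  assert (Hn2 : 2 <= INR n) by (pose proof (Rabs_pos Mx); lra).
  assert (INR n * (INR n - 1) / 2 * h ^ 2 >= 4 * INR n).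
  { replace (INR n * (INR n - 1) / 2 * h ^ 2) with ((INR n - 1) / 2 * (INR n * h ^ 2)) by field.
    assert ((INR n - 1) / 2 * 16 <= (INR n - 1) / 2 * (INR n * h ^ 2))
      by (apply Rmult_le_compat_l; lra).
    lra. }
  lra.
Qed.

Lemma real_growth_INR : real_growth INR.
Proof.
  split; [|split; [|split]].
  - exists (fun v => INR (nth 0 v 0%nat) / INR 1). split.
    + apply rat_recursive_ratio; [exists (CProj 0); apply computes_proj | | intro; lia].
      exists (const_code 1). apply computes_const.
    + intros d n. simpl. rewrite Rdiv_1_r, Rminus_diag, Rabs_R0.
      apply Rinv_0_lt_compat, pow_lt. lra.
  - intro n. apply pos_INR.
  - intro n. rewrite S_INR. lra.
  - intro Mx. destruct (INR_unbounded Mx) as [n Hn]. exists n. lra.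
Qed.

Lemma length_prefix w n : length (prefix w n) = n.
Proof. unfold prefix. rewrite length_map, length_seq. reflexivity. Qed.

Section Contradiction.
Variable Rt : rtype.
Variable phi : fsys.
Variables p q : R.
Variables J M : nat.
Variable dn : nat -> nat.
Variable cd : code.
Hypothesis phi_fs : forecasting_system phi.
Hypothesis phi_precise : precise phi.
Hypothesis J_ge : (4 <= J)%nat.
Hypothesis M_ge : (J + 4 <= M)%nat.
Hypothesis p_le : p <= (INR J - 3) / INR M.
Hypothesis q_ge : (INR J + 3) / INR M <= q.
Hypothesis cd_dn : computes1 cd dn.
Hypothesis dn_decider : threshold_decider J M phi dn.
Hypothesis random_eq : forall w, random Rt phi w <-> random Rt (stat p q) w.

Definition stat_tests := test_supermartingale_in Rt (stat p q).
Definition stat_test_enum := enum_process Rt stat_tests.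

(** Along this path every test for [[p, q]] stays bounded, and so does [inverse_bet], which
    forces [bet] to grow. *)
Definition witness : nat -> bool :=
  greedy_path stat_test_enum (inverse_bet J M dn).

Lemma stat_test_enum_cases i :
  stat_tests (stat_test_enum i) \/ stat_test_enum i = (fun _ => 1).
Proof. apply enum_process_cases. Qed.

Lemma stat_test_enum_nonneg i s : 0 <= stat_test_enum i s.
Proof. destruct (stat_test_enum_cases i) as [(_ & [H _] & _) | ->]; [apply H | lra]. Qed.

Lemma stat_test_enum_root i : stat_test_enum i [] = 1.
Proof. destruct (stat_test_enum_cases i) as [(_ & [_ H] & _) | ->]; [exact H | reflexivity]. Qed.

Lemma stat_test_enum_super i :
  supermartingale (precise_fs (winning_forecast J M dn)) (stat_test_enum i).
Proof.
  destruct (stat_test_enum_cases i) as [(_ & _ & H) | ->].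
  - apply (supermartingale_narrow (stat p q)); [|exact H].
    intro s. exact (winning_forecast_in J M J_ge M_ge dn p q s p_le q_ge).
  - apply supermartingale_precise. intro s. lra.
Qed.

Lemma inv_M_pos : 0 < / INR M.
Proof. apply Rinv_0_lt_compat, lt_0_INR. lia. Qed.

Ltac greedy_hyps :=
  first [ exact inv_M_pos
        | exact (winning_forecast_bounds J M J_ge M_ge dn)
        | exact stat_test_enum_nonneg | exact stat_test_enum_root | exact stat_test_enum_super
        | exact (inverse_bet_nonneg J M J_ge M_ge dn) | exact (inverse_bet_root J M dn)
        | exact (inverse_bet_super J M J_ge M_ge dn) ].

Lemma witness_bounds_test T : stat_tests T -> exists B, forall n, T (prefix witness n) <= B.
Proof.
  intro HT. destruct (enum_process_onto Rt stat_tests (fun T H => proj1 H) T HT) as [i <-].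
  apply (greedy_path_bounds_family (winning_forecast J M dn) (/ INR M)); greedy_hyps.
Qed.

Lemma witness_bet_growth n : bet_gain M ^ n / 2 <= bet J M dn (prefix witness n).
Proof.
  rewrite <- (length_prefix witness n) at 1.
  apply bet_ge_of_inverse_bet_le; [exact J_ge | exact M_ge |].
  apply (greedy_path_bounds_extra (winning_forecast J M dn) (/ INR M)); greedy_hyps.
Qed.

Lemma witness_random_stat : random Rt (stat p q) witness.
Proof.
  assert (Hbound : forall T, test_supermartingale_in Rt (stat p q) T ->
                   exists B, forall n, T (prefix witness n) <= B) by exact witness_bounds_test.
  destruct Rt; unfold random.
  1-3: intros (T & HT & Hinf); destruct (Hbound T HT) as [B HB];
    pose proof (LimSup_seq_le_bound _ B 0 (fun n _ => HB n)) as Hle; rewrite Hinf in Hle; exact Hle.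
  intros (T & tau & HT & (_ & _ & Hmono & Hunb) & Hnn). destruct (Hbound T HT) as [B HB].
  destruct (Hunb (B + 1)) as [n0 Hn0].
  assert (Hle : Rbar_le (LimSup_seq (fun n => T (prefix witness n) - tau n)) (-1)).
  { apply LimSup_seq_le_bound with n0. intros n Hn.
    pose proof (growing_prop tau n n0 Hmono Hn). pose proof (HB n). lra. }
  pose proof (Rbar_le_trans _ _ _ Hnn Hle). simpl in *. lra.
Qed.

Lemma witness_bet_unbounded :
  forall Mx N, exists n, (N <= n)%nat /\ Mx < bet J M dn (prefix witness n) - INR n.
Proof.
  intros Mx N. destruct (pow_half_minus_linear_unbounded _ (bet_gain_gt1 J M J_ge M_ge) Mx N)
    as [n [Hn HMx]].
  exists n. split; [exact Hn|]. pose proof (witness_bet_growth n). lra.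
Qed.

Lemma witness_not_random_phi : ~ random Rt phi witness.
Proof.
  assert (Hbet : test_supermartingale_in Rt phi (bet J M dn)).
  { split; [exact (bet_test_class J M J_ge M_ge dn cd cd_dn Rt)|].
    split; [exact (bet_test_process J M J_ge M_ge dn)|].
    exact (bet_super J M J_ge M_ge dn phi phi_fs phi_precise dn_decider). }
  destruct Rt; unfold random; intro Hrand; apply Hrand.
  1-3: exists (bet J M dn); split; [exact Hbet|]; apply LimSup_seq_unbounded;
    intros Mx N; destruct (witness_bet_unbounded Mx N) as [n [Hn HMx]];
    exists n; split; [exact Hn | pose proof (pos_INR n); lra].
  exists (bet J M dn), INR. split; [exact Hbet|]. split; [exact real_growth_INR|].
  rewrite LimSup_seq_unbounded; [exact I | exact witness_bet_unbounded].
Qed.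

Lemma no_recursive_threshold_decider : False.
Proof. apply witness_not_random_phi, random_eq, witness_random_stat. Qed.
End Contradiction.

(** * Deciding the threshold *)

Lemma INR_le_pow2 n : INR n <= 2 ^ n.
Proof.
  induction n as [|n IH]; [simpl; lra|].
  rewrite S_INR. simpl. pose proof (pow_R1_Rle 2 n ltac:(lra)). lra.
Qed.

Lemma INR_pow2 N : INR (2 ^ N) = 2 ^ N.
Proof. rewrite pow_INR. reflexivity. Qed.

Lemma threshold_grid p q : 0 <= p -> p < q -> q <= 1 ->
  exists N J, (4 <= J)%nat /\ (J + 4 <= 2 ^ N)%nat /\
    p <= (INR J - 3) / INR (2 ^ N) /\ (INR J + 3) / INR (2 ^ N) <= q.
Proof.
  intros Hp Hpq Hq.
  destruct (INR_unbounded (8 / (q - p))) as [N HN].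
  set (M := (2 ^ N)%nat).
  assert (HM : 8 < INR M * (q - p)).
  { assert (8 / (q - p) < INR M).
    { unfold M. rewrite INR_pow2. pose proof (INR_le_pow2 N). lra. }
    apply Rmult_lt_compat_r with (r := q - p) in H; [|lra].
    unfold Rdiv in H. rewrite Rmult_assoc, Rinv_l in H; lra. }
  assert (HM0 : 0 < INR M) by nra.
  destruct (archimed (p * INR M)) as [Hup1 Hup2].
  assert (Hz : (0 < up (p * INR M))%Z) by (apply lt_IZR; simpl; nra).
  set (K := Z.to_nat (up (p * INR M))).
  assert (HK : INR K = IZR (up (p * INR M)))
    by (unfold K; rewrite INR_IZR_INZ, Z2Nat.id; [reflexivity | lia]).
  assert (HK1 : (1 <= K)%nat) by (unfold K; lia).
  exists N, (K + 3)%nat. rewrite plus_INR, HK. simpl INR. fold M.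
  split; [lia|]. split; [|split].
  - apply INR_le. rewrite !plus_INR, HK. simpl INR. nra.
  - apply Rmult_le_reg_r with (INR M); [exact HM0|].
    unfold Rdiv. rewrite Rmult_assoc, Rinv_l; lra.
  - apply Rmult_le_reg_r with (INR M); [exact HM0|].
    unfold Rdiv. rewrite Rmult_assoc, Rinv_l; nra.
Qed.

Lemma le_ind_ratio_spec A B C J M : (0 < M)%nat ->
  le_ind (M * A) (M * B + J * (C + 1)) <> 0%nat <->
  (INR A - INR B) / (INR C + 1) * INR M <= INR J.
Proof.
  intro HM. rewrite le_ind_spec. pose proof (pos_INR C) as HC.
  replace ((INR A - INR B) / (INR C + 1) * INR M)
    with ((INR M * INR A - INR M * INR B) / (INR C + 1)) by (field; lra).
  split; intro Hle.
  - apply le_INR in Hle. rewrite plus_INR, !mult_INR, plus_INR in Hle. simpl INR in Hle.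
    apply Rmult_le_reg_r with (INR C + 1); [lra|]. unfold Rdiv. rewrite Rmult_assoc, Rinv_l; lra.
  - apply INR_le. rewrite plus_INR, !mult_INR, plus_INR. simpl INR.
    apply Rmult_le_compat_r with (r := INR C + 1) in Hle; [|lra].
    unfold Rdiv in Hle. rewrite Rmult_assoc, Rinv_l in Hle; lra.
Qed.

Lemma computable_threshold_decider phi N J : computable_fs phi ->
  exists dn cd, computes1 cd dn /\ threshold_decider J (2 ^ N) phi dn.
Proof.
  intros [[qa [(a & b & c & [ca Ha] & [cb Hb] & [cc Hc] & Hq) Happ]] _].
  set (M := (2 ^ N)%nat).
  assert (HM : (0 < M)%nat) by (unfold M; apply Nat.neq_0_lt_0, Nat.pow_nonzero; lia).
  assert (Hat : forall f cf, computes cf 2 f ->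
            computes (CComp cf [CProj 0; const_code N]) 1 (fun v => f [nth 0 v 0%nat; N])).
  { intros f cf Hf.
    exact (computes_comp _ _ [CProj 0; const_code N] [_; fun _ => N] 1 Hf
           ltac:(apply Forall2_cons; [apply computes_proj|];
                 apply Forall2_cons; [apply computes_const|]; apply Forall2_nil)). }
  exists (fun x => le_ind (M * a [x; N]) (M * b [x; N] + J * (c [x; N] + 1)))%nat.
  eexists. split.
  - exact (computes_comp2 _ _ _ _ _ _ 1 computes_le_ind
      (computes_comp2 _ _ _ _ _ _ 1 computes_mul (computes_const M 1) (Hat _ _ Ha))
      (computes_comp2 _ _ _ _ _ _ 1 computes_add
         (computes_comp2 _ _ _ _ _ _ 1 computes_mul (computes_const M 1) (Hat _ _ Hb))
         (computes_comp2 _ _ _ _ _ _ 1 computes_mul (computes_const J 1)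
            (computes_comp2 _ _ _ _ _ _ 1 computes_add (Hat _ _ Hc) (computes_const 1 1))))).
  - intro s. specialize (Happ s N). rewrite Hq in Happ by reflexivity. simpl in Happ.
    set (A := a [code_sit s; N]) in *. set (B := b [code_sit s; N]) in *.
    set (C := c [code_sit s; N]) in *.
    pose proof (le_ind_ratio_spec A B C J M HM) as Hspec.
    set (x := (INR A - INR B) / (INR C + 1)) in *.
    assert (HMe : INR M = 2 ^ N) by apply INR_pow2.
    assert (Hx : Rabs (fst (phi s) - x) * INR M < 1).
    { rewrite HMe. apply Rmult_lt_reg_r with (/ 2 ^ N); [apply Rinv_0_lt_compat, pow_lt; lra|].
      rewrite Rmult_assoc, Rinv_r, Rmult_1_l, Rmult_1_r by (apply pow_nonzero; lra). exact Happ. }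
    rewrite <- Rabs_pos_eq with (INR M) in Hx by apply pos_INR. rewrite <- Rabs_mult in Hx.
    apply Rabs_def2 in Hx. split; intro Hd.
    + apply Hspec in Hd. lra.
    + assert (~ x * INR M <= INR J) as Hgt%Rnot_le_lt by (rewrite <- Hspec; auto). lra.
Qed.

Lemma stationary_threshold_decider phi J M : stationary phi ->
  exists dn cd, computes1 cd dn /\ threshold_decider J M phi dn.
Proof.
  intros [I HI].
  set (b := if Rle_dec (fst I * INR M) (INR J) then 1%nat else 0%nat).
  exists (fun _ => b), (const_code b). split; [apply computes_const|].
  intro s. rewrite HI. unfold b. destruct Rle_dec as [H|H]; split; intro E; try congruence; lra.
Qed.

Theorem corollary13 (Rt : rtype) (phi : fsys) (p q : R) :
  forecasting_system phi -> precise phi ->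
  0 <= p -> p < q -> q <= 1 ->
  (forall w : nat -> bool, random Rt phi w <-> random Rt (stat p q) w) ->
  ~ computable_fs phi /\ ~ stationary phi.
Proof.
  intros Hfs Hpr Hp Hpq Hq Heq.
  destruct (threshold_grid p q Hp Hpq Hq) as (N & J & HJ & HM & HpJ & HqJ).
  assert (Hno : forall dn cd, computes1 cd dn -> ~ threshold_decider J (2 ^ N) phi dn).
  { intros dn cd Hcd Hdec.
    exact (no_recursive_threshold_decider Rt phi p q J (2 ^ N) dn cd
             Hfs Hpr HJ HM HpJ HqJ Hcd Hdec Heq). }
  split.
  - intro Hc. destruct (computable_threshold_decider phi N J Hc) as (dn & cd & Hcd & Hdec).
    exact (Hno dn cd Hcd Hdec).
  - intro Hs. destruct (stationary_threshold_decider phi J (2 ^ N) Hs) as (dn & cd & Hcd & Hdec).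
    exact (Hno dn cd Hcd Hdec).
Qed.
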